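(* Let $\Bbbk$ be a field of characteristic zero. For $n\in\mathbb Z$ let $\mathcal F_n\mathcal O=\mathrm{span}\{\mathcal U_k\mid k\ge n,\ k\ge-1\}$ and $\mathcal F_n\mathcal P=\mathrm{span}\{\mathcal V_k\mid k\ge n,\ k\ge -1\}$. Then $[\mathcal F_n\mathcal O,\mathcal F_m\mathcal P]\subseteq\mathcal F_{n+m}\mathcal P$ for all $n,m\in\mathbb Z$. Consequently, setting $\mathcal F_n\mathfrak b=\mathcal F_n\mathcal O\ltimes\mathcal F_n\mathcal P=\mathrm{span}\{\mathcal U_k,\mathcal V_k\mid k\ge n,\ k\ge-1\}$, one has $[\mathcal F_n\mathfrak b,\mathcal F_m\mathfrak b]\subseteq\mathcal F_{n+m}\mathfrak b$ for all $n,m$, and $\mathfrak b=\mathcal F_{-1}\mathfrak b\supseteq\mathcal F_0\mathfrak b\supseteq\mathcal F_1\mathfrak b\supseteq\cdots$, so $\mathcal F$ is a filtration of $\mathfrak b$.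
   Context: The centreless BCCA $\mathfrak b=\mathcal O\ltimes\mathcal P$ has a basis $\{u_n,v_m\mid n\ge1,m\ge0\}$ with $[u_n,u_m]=(n-m)(u_{n+m}-4u_{n+m-2})$, $[u_n,v_m]=(n-m)v_{n+m}-4(n-m-1)v_{n+m-2}$, $[v_n,v_m]=0$, where $\mathcal O=\mathrm{span}\{u_n\}$ and $\mathcal P=\mathrm{span}\{v_m\}$. Set $\mathcal U_n=u_{n+2}$ and $\mathcal V_n=v_{n+1}$ for $n\ge-1$. *)

From mathcomp Require Import all_boot all_order all_algebra.
Set Implicit Arguments. Unset Strict Implicit. Unset Printing Implicit Defensive.
Import Order.TTheory GRing.Theory Num.Theory.
Local Open Scope ring_scope.

(* Concrete model of the centreless BCCA  b = O ⋉ P  over a field K.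
   An element of b is a pair (p, q) of polynomials:
     p = \sum_i p_i 'X^i  encodes  \sum_i p_i u_(i+1)   (basis u_n, n >= 1),
     q = \sum_i q_i 'X^i  encodes  \sum_i q_i v_i       (basis v_m, m >= 0).
   Hence the coefficient of U_k = u_(k+2) is p`_(k+1) and the coefficient
   of V_k = v_(k+1) is q`_(k+1), for k >= -1. *)
Definition bcca (K : fieldType) := ({poly K} * {poly K})%type.

Section BCCA.
Variable K : fieldType.

Definition bu (n : nat) : bcca K := ('X^(n.-1), 0).
Definition bv (m : nat) : bcca K := (0, 'X^m).

Definition zdiff (n m : nat) : K := ((n%:Z - m%:Z)%R)%:~R.

Definition brUU (n m : nat) : bcca K :=
  zdiff n m *: (bu (n + m) - 4 *: bu (n + m - 2)).

(* [u_n, v_m] = (n-m) v_(n+m) - 4 (n-m-1) v_(n+m-2)   (n >= 1, m >= 0);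
   when n + m - 2 < 0 (i.e. n = 1, m = 0) the coefficient n-m-1 is 0. *)
Definition brUV (n m : nat) : bcca K :=
  zdiff n m *: bv (n + m) - (4 * (zdiff n m - 1)) *: bv (n + m - 2).

(* bilinear extension; [v_n, v_m] = 0, [v_m, u_n] = - [u_n, v_m] *)
Definition lie (x y : bcca K) : bcca K :=
  \sum_(i < size x.1) \sum_(j < size y.1)
      (x.1`_i * y.1`_j) *: brUU i.+1 j.+1
  + \sum_(i < size x.1) \sum_(j < size y.2)
      (x.1`_i * y.2`_j) *: brUV i.+1 j
  - \sum_(i < size x.2) \sum_(j < size y.1)
      (x.2`_i * y.1`_j) *: brUV j.+1 i.

(* coefficient of U_k / V_k is the polynomial coefficient of index k+1;
   "p lies in span{ basis_k | k >= n, k >= -1 }" means all coefficients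
   of basis_k with k < n vanish. *)
Definition filt_poly (n : int) (p : {poly K}) : Prop :=
  forall i : nat, (i%:Z - 1 < n)%R -> p`_i = 0.

Definition FO (n : int) (x : bcca K) : Prop := filt_poly n x.1 /\ x.2 = 0.
Definition FP (n : int) (x : bcca K) : Prop := x.1 = 0 /\ filt_poly n x.2.
Definition Fb (n : int) (x : bcca K) : Prop := filt_poly n x.1 /\ filt_poly n x.2.

End BCCA.

From mathcomp Require Import all_boot all_order all_algebra zify.
Set Implicit Arguments. Unset Strict Implicit. Unset Printing Implicit Defensive.
Import Order.TTheory GRing.Theory Num.Theory.
Local Open Scope ring_scope.

(** The coefficient of 'X^i in either component is the coordinate on the
    basis vector of degree [i - 1], and in these degrees
    [U_a, U_b] = (a - b) (U_(a+b+2) - 4 U_(a+b)) and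
    [U_a, V_b] = (a - b + 1) V_(a+b+2) - 4 (a - b) V_(a+b) only involve
    degrees at least [a + b].  A bracket of two filtered elements expands
    bilinearly into such brackets, each weighted by a product of coordinates
    that vanishes unless both degrees are high enough. *)

Section Filtration.
Variable K : fieldType.
Implicit Types (p q : {poly K}) (x y z : bcca K) (n m : int).

Lemma filt_poly0 n : filt_poly n (0 : {poly K}).
Proof. by move=> i _; rewrite coef0. Qed.

Lemma filt_polyD n p q : filt_poly n p -> filt_poly n q -> filt_poly n (p + q).
Proof. by move=> hp hq i hi; rewrite coefD hp ?hq ?addr0. Qed.

Lemma filt_polyN n p : filt_poly n p -> filt_poly n (- p).
Proof. by move=> hp i hi; rewrite coefN hp ?oppr0. Qed.

Lemma filt_polyZ n c p : filt_poly n p -> filt_poly n (c *: p).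
Proof. by move=> hp i hi; rewrite coefZ hp ?mulr0. Qed.

Lemma filt_polyXn n k : n <= k%:Z - 1 -> filt_poly n ('X^k : {poly K}).
Proof. by move=> hk i hi; rewrite coefXn; case: eqP => // ei; lia. Qed.

Lemma filt_poly_le n m p : n <= m -> filt_poly m p -> filt_poly n p.
Proof. by move=> hnm hp i hi; apply: hp; lia. Qed.

Lemma filt_polyNr1 p : filt_poly (-1) p.
Proof. by move=> i hi; lia. Qed.

Lemma Fb0 n : Fb n (0 : bcca K).
Proof. by split; apply: filt_poly0. Qed.

Lemma FbD n x y : Fb n x -> Fb n y -> Fb n (x + y).
Proof. by case=> ? ? [? ?]; split; apply: filt_polyD. Qed.

Lemma FbN n x : Fb n x -> Fb n (- x).
Proof. by case=> ? ?; split; apply: filt_polyN. Qed.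

Lemma FbZ n c x : Fb n x -> Fb n (c *: x).
Proof. by case=> ? ?; split; apply: filt_polyZ. Qed.

Lemma Fb_sum n I (r : seq I) (P : pred I) (F : I -> bcca K) :
  (forall i, P i -> Fb n (F i)) -> Fb n (\sum_(i <- r | P i) F i).
Proof. by move=> FnF; apply: big_ind => //; [apply: Fb0 | apply: FbD]. Qed.

Lemma Fb_le n m x : n <= m -> Fb m x -> Fb n x.
Proof. by move=> hnm [? ?]; split; apply: filt_poly_le hnm _. Qed.

Lemma Fb_FO n x : FO n x -> Fb n x.
Proof. by case: x => p q [? /= ->]; split; last apply: filt_poly0. Qed.

Lemma Fb_FP n x : FP n x -> Fb n x.
Proof. by case: x => p q [/= -> ?]; split; first apply: filt_poly0. Qed.

Lemma Fb_brUU (i j : nat) : Fb (i%:Z - 1 + (j%:Z - 1)) (brUU K i.+1 j.+1).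
Proof.
rewrite /brUU /bu; split => /=; last by rewrite scaler0 subr0 scaler0; apply: filt_poly0.
by apply/filt_polyZ/filt_polyD; [|apply/filt_polyN/filt_polyZ]; apply: filt_polyXn; lia.
Qed.

Lemma Fb_brUV (i j : nat) : Fb (i%:Z - 1 + (j%:Z - 1)) (brUV K i.+1 j).
Proof.
rewrite /brUV /bv; split => /=; first by rewrite !scaler0 subr0; apply: filt_poly0.
by apply: filt_polyD; [|apply: filt_polyN]; apply/filt_polyZ/filt_polyXn; lia.
Qed.

Lemma brUV_fst (i j : nat) : (brUV K i j).1 = 0.
Proof. by rewrite /= !scaler0 subr0. Qed.

Lemma Fb_scale_coef n m p q (i j : nat) z :
  filt_poly n p -> filt_poly m q -> Fb (i%:Z - 1 + (j%:Z - 1)) z ->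
  Fb (n + m) ((p`_i * q`_j) *: z).
Proof.
move=> hp hq hz.
case: (ltP (i%:Z - 1) n) => [hi | hi]; first by rewrite hp // mul0r scale0r; apply: Fb0.
case: (ltP (j%:Z - 1) m) => [hj | hj]; first by rewrite hq // mulr0 scale0r; apply: Fb0.
by apply: FbZ; apply: Fb_le hz; apply: lerD.
Qed.

Lemma Fb_lie n m x y : Fb n x -> Fb m y -> Fb (n + m) (lie x y).
Proof.
case=> hx1 hx2 [hy1 hy2]; rewrite /lie.
apply: FbD; first apply: FbD; last apply: FbN;
  apply: Fb_sum => i _; apply: Fb_sum => j _.
- exact: Fb_scale_coef (Fb_brUU i j).
- exact: Fb_scale_coef (Fb_brUV i j).
- by rewrite mulrC [n + m]addrC; apply: Fb_scale_coef (Fb_brUV j i).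
Qed.

Lemma lie_fst_eq0 x y : y.1 = 0 -> (lie x y).1 = 0.
Proof.
move=> y1_0; rewrite /lie y1_0 size_poly0.
under [X in X + _ - _]eq_bigr do rewrite big_ord0.
under [X in _ - X]eq_bigr do rewrite big_ord0.
rewrite !big1_eq add0r subr0 raddf_sum big1 // => i _; rewrite raddf_sum big1 // => j _.
by rewrite -[LHS]/(_ *: (brUV K _ _).1) brUV_fst scaler0.
Qed.

End Filtration.

Theorem proposition5p2 (K : fieldType) (charK : [pchar K] =i pred0) :
  (forall (n m : int) (x y : bcca K),
      FO n x -> FP m y -> FP (n + m) (lie x y))
  /\ (forall (n m : int) (x y : bcca K),
      Fb n x -> Fb m y -> Fb (n + m) (lie x y))
  /\ (forall x : bcca K, Fb (-1) x)
  /\ (forall (n : int) (x : bcca K), Fb (n + 1) x -> Fb n x).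
Proof.
split; last split; last split.
- move=> n m x y FOx FPy; split; first exact/lie_fst_eq0/FPy.1.
  by have [] := Fb_lie (Fb_FO FOx) (Fb_FP FPy).
- exact: Fb_lie.
- by move=> x; split; apply: filt_polyNr1.
- by move=> n x; apply: Fb_le; rewrite lerDl.
Qed.
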